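(* For every graph $G$, the graph $KB_m(G)$ contains no induced subgraph isomorphic to a $\mathrm{net}^*$ graph.
   Context: All graphs are finite and simple. A biclique of a graph $G$ is a set $P\subseteq V(G)$ such that the induced subgraph $G[P]$ is a complete bipartite graph with both parts nonempty, and $P$ is inclusion-maximal with this property. Since $G[P]$ is connected, its bipartition into two nonempty independent sets $X,Y$ (every vertex of $X$ adjacent to every vertex of $Y$) is unique; we write $P=XY$ to mean $P=X\cup Y$ with $X,Y$ these two parts, called the sides of $P$. Two bicliques $P,Q$ of $G$ are mutually included if their sides can be named $P=X_PY_P$, $Q=X_QY_Q$ so that $X_Q\subsetneq X_P$ and $Y_P\subsetneq Y_Q$. The mutually included biclique graph $KB_m(G)$ has the set of bicliques of $G$ as vertex set, two distinct bicliques being adjacent iff they are mutually included. The net is the graph on six vertices $x_1,x_2,x_3,s_1,s_2,s_3$ whose edges are $x_1x_2,x_2x_3,x_1x_3,x_1s_1,x_2s_2,x_3s_3$. A $\mathrm{net}^*$ graph is any graph obtained from the net by adding zero or more edges, each joining two vertices of $\{s_1,s_2,s_3\}$. *)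

From mathcomp Require Import all_boot.
Set Implicit Arguments. Unset Strict Implicit. Unset Printing Implicit Defensive.

(* A finite simple graph: vertex type T : finType, adjacency e : rel T,
   symmetric and irreflexive (hypotheses of the theorem). *)

Section Bicliques.
Variables (T : finType) (e : rel T).

Definition sides (P X Y : {set T}) : bool :=
  [&& X != set0, Y != set0, [disjoint X & Y], X :|: Y == P,
      [forall x in X, forall x' in X, ~~ e x x'],
      [forall y in Y, forall y' in Y, ~~ e y y'] &
      [forall x in X, forall y in Y, e x y]].

Definition complete_bip (P : {set T}) : bool :=
  [exists X : {set T}, exists Y : {set T}, sides P X Y].

Definition is_biclique (P : {set T}) : bool :=
  complete_bip P && [forall Q : {set T}, (P \proper Q) ==> ~~ complete_bip Q].

Definition mut_incl (P Q : {set T}) : bool :=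
  [exists XP : {set T}, exists YP : {set T}, exists XQ : {set T},
   exists YQ : {set T},
     [&& sides P XP YP, sides Q XQ YQ, XQ \proper XP & YP \proper YQ]].

Definition kbm_adj (P Q : {set T}) : bool := (P != Q) && mut_incl P Q.

End Bicliques.

(* net^* graphs on vertex set 'I_6: 0,1,2 = x1,x2,x3 and 3,4,5 = s1,s2,s3.
   b12, b13, b23 say whether the optional edges s1s2, s1s3, s2s3 are added. *)
Definition netstar_adj (b12 b13 b23 : bool) (i j : 'I_6) : bool :=
  let u := nat_of_ord i in let v := nat_of_ord j in
  (u != v) &&
  [|| (u < 3) && (v < 3),
      (u < 3) && (v == u + 3),
      (v < 3) && (u == v + 3),
      [&& minn u v == 3, maxn u v == 4 & b12],
      [&& minn u v == 3, maxn u v == 5 & b13] |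
      [&& minn u v == 4, maxn u v == 5 & b23]].

From mathcomp Require Import all_boot.
Set Implicit Arguments. Unset Strict Implicit. Unset Printing Implicit Defensive.

(* Represent the sides of a biclique P by an ordered pair p = (X, Y), an
   "orientation" of P; the two orientations of P are p and its flip (Y, X),
   and there are no others (orients_uniq).  Orientations are strictly ordered
   by  (X, Y) < (X', Y')  iff  X ⊊ X' and Y' ⊊ Y, and P, Q are mutually
   included iff some orientations of P and Q are comparable.
   The key fact (cmp_consistent) is that orientations chosen along a triangle
   of KB_m(G) are pairwise comparable, so the three vertices of a triangle
   form a chain a < m < b.  Every neighbour of the middle vertex m is then
   comparable with an orientation of m, hence (by transitivity) lies above a
   or below b: it is a neighbour of another triangle vertex
   (triangle_dominating_vertex).  In a net^* the pendant vertex attached to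
   that middle triangle vertex has no other triangle neighbour, which gives
   the contradiction. *)

Definition orientation (T : finType) := ({set T} * {set T})%type.

Definition flip (T : finType) (p : orientation T) : orientation T := (p.2, p.1).

Definition below (T : finType) (p q : orientation T) : bool :=
  (p.1 \proper q.1) && (q.2 \proper p.2).

Definition cmp (T : finType) (p q : orientation T) : bool :=
  below p q || below q p.

Section Orientations.
Variable T : finType.
Implicit Types p q r : orientation T.

Lemma below_trans : transitive (@below T).
Proof.
move=> q p r /andP[p1q1 q2p2] /andP[q1r1 r2q2].
by rewrite /below (proper_trans p1q1 q1r1) (proper_trans r2q2 q2p2).
Qed.

Lemma below_irr : irreflexive (@below T).
Proof. by move=> p; rewrite /below properxx. Qed.

Lemma flipK : involutive (@flip T).
Proof. by case. Qed.

Lemma below_flip p q : below p q = below (flip q) (flip p).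
Proof. by rewrite /below andbC. Qed.

Lemma below_sub p q : below p q -> p.1 \subset q.1 /\ q.2 \subset p.2.
Proof. by case/andP=> /proper_sub-> /proper_sub->. Qed.

Lemma cmpC p q : cmp p q = cmp q p.
Proof. by rewrite /cmp orbC. Qed.

Lemma cmp_flip p q : cmp p q = cmp (flip p) (flip q).
Proof. by rewrite /cmp orbC -!below_flip. Qed.

End Orientations.

Lemma middle_of_three (S : Type) (r : rel S)
    (r_trans : transitive r) (r_irr : irreflexive r) (h : 'I_3 -> S) :
  (forall i j, i != j -> r (h i) (h j) || r (h j) (h i)) ->
  exists m i j, [/\ i != m, j != m, r (h i) (h m) & r (h m) (h j)].
Proof.
pose i0 := @Ordinal 3 0 isT; pose i1 := @Ordinal 3 1 isT.
pose i2 := @Ordinal 3 2 isT.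
have no_cycle x y z : r x y -> r y z -> r z x -> False.
  move=> xy yz zx; move: (r_irr x).
  by rewrite (r_trans _ _ _ (r_trans _ _ _ xy yz) zx).
move=> cmp3; have:= cmp3 i0 i1 isT; have:= cmp3 i0 i2 isT; have:= cmp3 i1 i2 isT.
case/orP=> c12; case/orP=> c02; case/orP=> c01.
- by exists i1, i0, i2.
- by exists i0, i1, i2.
- by case: (no_cycle _ _ _ c01 c12 c02).
- by exists i2, i1, i0.
- by exists i2, i0, i1.
- by case: (no_cycle _ _ _ c02 c12 c01).
- by exists i0, i2, i1.
- by exists i1, i2, i0.
Qed.

Definition orients (T : finType) (e : rel T) (P : {set T}) (p : orientation T) :=
  sides e P p.1 p.2.

Definition kb_rel (T : finType) (e : rel T) (P Q : {set T}) : bool :=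
  mut_incl e P Q || mut_incl e Q P.

Section Bicliques.
Variables (T : finType) (e : rel T).
Hypothesis e_sym : symmetric e.
Implicit Types (P Q R : {set T}) (p q r : orientation T).

Lemma orientsP P p : orients e P p ->
  [/\ p.1 != set0, p.2 != set0, [disjoint p.1 & p.2], P = p.1 :|: p.2 &
   [/\ {in p.1 &, forall x y, ~~ e x y}, {in p.2 &, forall x y, ~~ e x y} &
       {in p.1 & p.2, forall x y, e x y}]].
Proof.
case/and5P=> X0 Y0 XY /eqP defP /and3P[iX iY cXY]; split=> //.
split=> x y xA yB.
- exact: (forall_inP (forall_inP iX x xA) y yB).
- exact: (forall_inP (forall_inP iY x xA) y yB).
- exact: (forall_inP (forall_inP cXY x xA) y yB).
Qed.

Lemma orients_flip P p : orients e P p -> orients e P (flip p).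
Proof.
case/and5P=> X0 Y0 XY defP /and3P[iX iY cXY].
rewrite /orients /sides /= X0 Y0 disjoint_sym XY setUC defP iX iY /=.
apply/forall_inP=> y yY; apply/forall_inP=> x xX.
by rewrite e_sym (forall_inP (forall_inP cXY x xX) y yY).
Qed.

Lemma orients_side2 P p : orients e P p -> p.2 = P :\: p.1.
Proof.
case/orientsP=> _ _ XY -> _.
by rewrite setDUl setDv set0U; apply/esym/setDidPl; rewrite disjoint_sym.
Qed.

Lemma orients_meet P p q x : orients e P p -> orients e P q ->
  x \in p.1 -> x \in q.1 -> q = p.
Proof.
have sub1 p' q' : orients e P p' -> orients e P q' ->
    x \in p'.1 -> x \in q'.1 -> q'.1 \subset p'.1.
  move=> /orientsP[_ _ _ defP [_ _ cp]] /orientsP[_ _ _ defP' [iq _ _]] xp xq.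
  apply/subsetP=> z zq; have: z \in P by rewrite defP' inE zq.
  by rewrite defP inE => /orP[//|zp2]; move: (iq _ _ xq zq); rewrite cp.
move=> hp hq xp xq; have e1 : q.1 = p.1 by apply/eqP; rewrite eqEsubset !sub1.
move: (orients_side2 hp) (orients_side2 hq) e1.
by case: p q {hp hq xp xq} => [p1 p2] [q1 q2] /= -> -> ->.
Qed.

Lemma orients_uniq P p q : orients e P p -> orients e P q -> q = p \/ q = flip p.
Proof.
move=> hp hq; have [q0 _ _ defQ _] := orientsP hq.
have [x xq] := set0Pn _ q0.
have [xp | xNp] := boolP (x \in p.1).
  by left; exact: (orients_meet hp hq xp xq).
right; apply: (orients_meet (orients_flip hp) hq _ xq).
have [_ _ _ defP _] := orientsP hp.
have: x \in P by rewrite defQ inE xq.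
by rewrite defP inE (negbTE xNp).
Qed.

(* Comparable orientations of complete bipartite sets have crossing sides
   disjoint: a vertex of q.1 ∩ p.2 would be adjacent to p.1 ⊆ q.1. *)
Lemma below_cross_disjoint P Q p q : orients e P p -> orients e Q q ->
  below p q -> [disjoint q.1 & p.2].
Proof.
move=> /orientsP[p0 _ _ _ [_ _ cp]] /orientsP[_ _ _ _ [iq _ _]] /below_sub[pq _].
have [x xp] := set0Pn _ p0; rewrite -setI_eq0; apply/set0Pn=> -[z /setIP[zq zp]].
by move: (iq _ _ (subsetP pq x xp) zq); rewrite cp.
Qed.

Lemma mut_inclP P Q : reflect
  (exists p q, [/\ orients e P p, orients e Q q & below q p]) (mut_incl e P Q).
Proof.
apply: (iffP existsP).
  move=> [XP /existsP[YP /existsP[XQ /existsP[YQ /and4P[hP hQ h1 h2]]]]].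
  by exists (XP, YP), (XQ, YQ); split; rewrite // /below h1 h2.
move=> [[XP YP] [[XQ YQ] [hP hQ /andP[h1 h2]]]].
exists XP; apply/existsP; exists YP; apply/existsP; exists XQ.
by apply/existsP; exists YQ; apply/and4P.
Qed.

Lemma kb_rel_of_cmp P Q p q : orients e P p -> orients e Q q ->
  cmp p q -> kb_rel e P Q.
Proof.
move=> hp hq /orP[pq|qp]; apply/orP; [right|left]; apply/mut_inclP.
  by exists q, p.
by exists p, q.
Qed.

Lemma kb_rel_orient P Q p : orients e P p -> kb_rel e P Q ->
  exists2 q, orients e Q q & cmp p q.
Proof.
move=> hp PQ.
suff [p' [q' [hp' hq' c]]] :
    exists p' q', [/\ orients e P p', orients e Q q' & cmp p' q'].
  have [|] := orients_uniq hp hp' => E; subst p'; first by exists q'.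
  by exists (flip q'); [exact: orients_flip | rewrite cmp_flip flipK].
case/orP: PQ => /mut_inclP[p' [q' [h1 h2 b]]].
  by exists p', q'; rewrite /cmp b orbT.
by exists q', p'; rewrite /cmp b.
Qed.

Lemma cmp_below_common P Q R p q r :
  orients e P p -> orients e Q q -> orients e R r ->
  below p q -> below r q -> kb_rel e P R -> cmp p r.
Proof.
move=> hp hq hr pq rq PR; have [r' hr' c] := kb_rel_orient hp PR.
have [|] := orients_uniq hr hr' => E; subst r'; first by []; exfalso.
have [p0 _ _ _ _] := orientsP hp; have [_ q20 dq _ _] := orientsP hq.
have [pq1 qp2] := below_sub pq; have [rq1 _] := below_sub rq.
(* flip r is incomparable with p: either p.1 would lie in q.1 ∩ r.2, which
   is empty, or q.2 ⊆ p.2 ⊆ r.1 ⊆ q.1 would contradict disjoint sides of q *)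
case/orP: c => /below_sub[/= s1 s2].
- have [x xp] := set0Pn _ p0; have xq := subsetP pq1 x xp.
  by have:= subsetP s1 x xp; rewrite (disjointFr (below_cross_disjoint hr hq rq) xq).
- have [y yq] := set0Pn _ q20.
  have yq1 : y \in q.1 by apply/(subsetP rq1)/(subsetP s2)/(subsetP qp2).
  by rewrite (disjointFr dq yq1) in yq.
Qed.

Lemma cmp_consistent P Q R p q r :
  orients e P p -> orients e Q q -> orients e R r ->
  cmp p q -> cmp r q -> kb_rel e P R -> cmp p r.
Proof.
move=> hp hq hr /orP[pq|qp] /orP[rq|qr] PR.
- exact: (cmp_below_common hp hq hr).
- by rewrite /cmp (below_trans pq qr).
- by rewrite /cmp (below_trans rq qp) orbT.
- rewrite cmp_flip.
  have hp' := orients_flip hp; have hq' := orients_flip hq.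
  have hr' := orients_flip hr.
  by apply: (cmp_below_common hp' hq' hr') => //; rewrite -below_flip.
Qed.

(* If a < m < b are orientations of bicliques, every neighbour of the middle
   biclique is comparable with m, hence lies above a or below b. *)
Lemma middle_dominates Pa Pm Pb Q a m b :
  orients e Pa a -> orients e Pm m -> orients e Pb b ->
  below a m -> below m b -> kb_rel e Pm Q -> kb_rel e Pa Q || kb_rel e Pb Q.
Proof.
move=> ha hm hb am mb mQ; have [q hq /orP[mq|qm]] := kb_rel_orient hm mQ.
  by rewrite (kb_rel_of_cmp ha hq) // /cmp (below_trans am mq).
by rewrite (kb_rel_of_cmp hb hq) ?orbT // /cmp (below_trans qm mb) orbT.
Qed.

(* The three vertices of a triangle of KB_m(G) admit pairwise comparable
   orientations: orient each relative to the first one (cmp_consistent). *)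
Lemma triangle_orientation (g : 'I_3 -> {set T}) :
  (forall i, complete_bip e (g i)) ->
  (forall i j, i != j -> kb_rel e (g i) (g j)) ->
  exists h : 'I_3 -> orientation T,
    (forall i, orients e (g i) (h i)) /\ (forall i j, i != j -> cmp (h i) (h j)).
Proof.
move=> gbip grel; have /existsP[X0 /existsP[Y0 h0]] := gbip ord0.
have {}h0 : orients e (g ord0) (X0, Y0) by [].
have /fin_all_exists[h hh] : forall i, exists p, orients e (g i) p /\
    (if ord0 == i then p = (X0, Y0) else cmp p (X0, Y0)).
  move=> i; case: eqVneq => [<-|i0]; first by exists (X0, Y0).
  have [p hp c] := kb_rel_orient h0 (grel ord0 i i0).
  by exists p; rewrite cmpC.
exists h; split=> [i|i j ij]; first by case: (hh i).
have [hi ci] := hh i; have [hj cj] := hh j.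
case: (eqVneq ord0 i) ci ij => [<- -> ij | i0 ci ij].
  by rewrite (negbTE ij) in cj; rewrite cmpC.
case: (eqVneq ord0 j) cj => [_ -> // | j0 cj].
exact: (cmp_consistent hi h0 hj ci cj (grel i j ij)).
Qed.

Lemma triangle_dominating_vertex (g : 'I_3 -> {set T}) :
  (forall i, complete_bip e (g i)) ->
  (forall i j, i != j -> kb_rel e (g i) (g j)) ->
  exists m, forall Q, kb_rel e (g m) Q -> exists2 j, j != m & kb_rel e (g j) Q.
Proof.
move=> gbip grel; have [h [hh hcmp]] := triangle_orientation gbip grel.
have [m [i [j [im jm bim bmj]]]] :=
  middle_of_three (@below_trans T) (@below_irr T) hcmp.
exists m => Q mQ.
by case/orP: (middle_dominates (hh i) (hh m) (hh j) bim bmj mQ) => ?;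
  [exists i | exists j].
Qed.

Lemma kb_rel_kbm_adj P Q : P != Q -> kb_rel e P Q = kbm_adj e P Q || kbm_adj e Q P.
Proof. by move=> PQ; rewrite /kbm_adj PQ eq_sym PQ. Qed.

End Bicliques.

Section NetStar.
Variables b12 b13 b23 : bool.

Lemma netstar_adj_sym : symmetric (netstar_adj b12 b13 b23).
Proof.
by move=> [[|[|[|[|[|[|//]]]]]] ?] [[|[|[|[|[|[|//]]]]]] ?].
Qed.

Lemma netstar_triangle (i j : 'I_3) :
  i != j -> netstar_adj b12 b13 b23 (lshift 3 i) (lshift 3 j).
Proof. by case: i j => [[|[|[|//]]] ?] [[|[|[|//]]] ?]. Qed.

Lemma netstar_pendant (m : 'I_3) : netstar_adj b12 b13 b23 (lshift 3 m) (rshift 3 m).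
Proof. by case: m => [[|[|[|//]]] ?]. Qed.

Lemma netstar_pendant_private (j m : 'I_3) :
  j != m -> netstar_adj b12 b13 b23 (lshift 3 j) (rshift 3 m) = false.
Proof. by case: j m => [[|[|[|//]]] ?] [[|[|[|//]]] ?]. Qed.

End NetStar.

Theorem corollary3 (T : finType) (e : rel T)
    (e_sym : symmetric e) (e_irr : irreflexive e)
    (b12 b13 b23 : bool) (f : 'I_6 -> {set T}) :
  injective f ->
  (forall i, is_biclique e (f i)) ->
  ~ (forall i j, kbm_adj e (f i) (f j) = netstar_adj b12 b13 b23 i j).
Proof.
move=> f_inj f_bic f_adj.
have f_bip i : complete_bip e (f i) by case/andP: (f_bic i).
have rel_of_adj i j : netstar_adj b12 b13 b23 i j -> kb_rel e (f i) (f j).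
  by rewrite -f_adj => /andP[_ PQ]; rewrite /kb_rel PQ.
(* the triangle x1 x2 x3 has a dominating vertex x_m ... *)
have [m dom] := @triangle_dominating_vertex T e e_sym (fun i => f (lshift 3 i))
  (fun i => f_bip _) (fun i j ij => rel_of_adj _ _ (netstar_triangle _ _ _ ij)).
(* ... so its pendant s_m is related to another x_j, which net^* forbids *)
have [j jm] := dom _ (rel_of_adj _ _ (netstar_pendant _ _ _ m)).
rewrite kb_rel_kbm_adj ?(inj_eq f_inj) ?(eq_lrshift j m) //.
rewrite (f_adj (lshift 3 j) (rshift 3 m)) (f_adj (rshift 3 m) (lshift 3 j)).
by rewrite (netstar_adj_sym _ _ _ (rshift 3 m : 'I_6)) netstar_pendant_private.
Qed.
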